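(* Let $L\le\mathrm{Aff}(\mathbb{R}^n)$ be a subgroup whose centralizer in $\mathrm{Aff}(\mathbb{R}^n)$ acts transitively on $\mathbb{R}^n$. Then the action of $L$ on $\mathbb{R}^n$ is proper if and only if $L$ is a closed subgroup of $\mathrm{Aff}(\mathbb{R}^n)$.
   Context: $\mathrm{Aff}(\mathbb{R}^n)$ is the Lie group of affine transformations of $\mathbb{R}^n$. An action of a topological group $L$ on a locally compact Hausdorff space $X$ is proper if for every compact $K\subseteq X$ the set $\{\ell\in L\mid \ell K\cap K\neq\emptyset\}$ is compact. *)

From Stdlib Require Import Reals.
From mathcomp Require Import ssreflect ssrfun ssrbool eqtype ssrnat fintype bigop.

Set Implicit Arguments.
Unset Strict Implicit.

Open Scope R_scope.

Definition vec (n : nat) := 'I_n -> R.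
Definition mat (n : nat) := 'I_n -> 'I_n -> R.

Definition mulmv n (A : mat n) (x : vec n) : vec n :=
  fun i => \big[Rplus/0]_(k < n) (A i k * x k).
Definition mulmm n (A B : mat n) : mat n :=
  fun i j => \big[Rplus/0]_(k < n) (A i k * B k j).
Definition idm n : mat n := fun i j => if i == j then 1 else 0.
Definition addv n (x y : vec n) : vec n := fun i => x i + y i.

Definition invertible n (A : mat n) : Prop :=
  exists B : mat n, mulmm A B = @idm n /\ mulmm B A = @idm n.

(* An affine map x |-> A x + b is represented by the pair (A, b);
   Aff(R^n) is the set of pairs with A invertible. *)
Definition aff n := (mat n * vec n)%type.
Definition is_aff n (g : aff n) : Prop := invertible g.1.
Definition act n (g : aff n) (x : vec n) : vec n := addv (mulmv g.1 x) g.2.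
(* composition: (comp g h) x = g (h x) *)
Definition comp n (g h : aff n) : aff n :=
  (mulmm g.1 h.1, addv (mulmv g.1 h.2) g.2).
Definition aff_id n : aff n := (@idm n, fun _ => 0).

Definition subgroup n (L : aff n -> Prop) : Prop :=
  (forall g, L g -> is_aff g) /\
  L (@aff_id n) /\
  (forall g h, L g -> L h -> L (comp g h)) /\
  (forall g, L g -> exists h, L h /\ comp g h = @aff_id n /\ comp h g = @aff_id n).

Definition centralizer n (L : aff n -> Prop) (h : aff n) : Prop :=
  is_aff h /\ forall l, L l -> comp h l = comp l h.

Definition transitive_on_Rn n (C : aff n -> Prop) : Prop :=
  forall x y : vec n, exists h, C h /\ act h x = y.

(* Standard (Euclidean) topologies, given by sup-norm boxes. *)
Definition ballv n (x : vec n) (e : R) (y : vec n) : Prop :=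
  forall i, Rabs (x i - y i) < e.
Definition balla n (g : aff n) (e : R) (h : aff n) : Prop :=
  (forall i j, Rabs (g.1 i j - h.1 i j) < e) /\ ballv g.2 e h.2.

Definition is_open {X : Type} (ball : X -> R -> X -> Prop) (U : X -> Prop) : Prop :=
  forall x, U x -> exists e, 0 < e /\ forall y, ball x e y -> U y.

Definition compact {X : Type} (ball : X -> R -> X -> Prop) (K : X -> Prop) : Prop :=
  forall (I : Type) (U : I -> X -> Prop),
    (forall i, is_open ball (U i)) ->
    (forall x, K x -> exists i, U i x) ->
    exists l : list I, forall x, K x -> exists i, List.In i l /\ U i x.

Definition proper_action n (L : aff n -> Prop) : Prop :=
  forall K : vec n -> Prop, compact (@ballv n) K ->
    compact (@balla n) (fun l => L l /\ exists x, K x /\ K (act l x)).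

Definition closed_in_Aff n (L : aff n -> Prop) : Prop :=
  forall g, is_aff g -> ~ L g ->
    exists e, 0 < e /\ forall h, is_aff h -> balla g e h -> ~ L h.

(* If L acts properly and g lies in the closure of L, the elements of L close
   to g all move 0 into a fixed box K, so they lie in the compact set
   {l in L | lK meets K}, whose closedness forces g in L.
   Conversely let L be closed.  For h in the centralizer, l (h 0) = h (l 0);
   taking h 0 = e_i shows that the linear part of l in L is bounded affinely by
   its translation part l 0, and taking h 0 = p near a point of a compact K
   shows that l 0 is bounded as soon as lK meets K.  So the return set
   {l in L | lK meets K} is bounded.  It is also closed: a limit of its elements
   is a limit of invertible maps whose inverses stay in the same bounded set,
   hence an element of Aff(R^n), hence of L. *)

From HB Require Import structures.
From Stdlib Require Import Reals Lra Classical ClassicalEpsilon FunctionalExtensionality.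
From mathcomp Require Import ssreflect ssrfun ssrbool eqtype ssrnat seq fintype finfun bigop.
From Stdlib Require Import List.
Set Implicit Arguments.
Unset Strict Implicit.
Open Scope R_scope.

HB.instance Definition _ := Monoid.isComLaw.Build R 0 Rplus
  (fun x y z => esym (Rplus_assoc x y z)) Rplus_comm Rplus_0_l.

Section RealSums.
Variable n : nat.
Implicit Types (F G : 'I_n -> R) (c : R).

Lemma Rmult_sumr c F :
  c * \big[Rplus/0]_(k < n) F k = \big[Rplus/0]_(k < n) (c * F k).
Proof. by apply: (big_endo (fun x => c * x)) => [x y|]; ring. Qed.

Lemma Rmult_suml c F :
  (\big[Rplus/0]_(k < n) F k) * c = \big[Rplus/0]_(k < n) (F k * c).
Proof. by apply: (big_endo (fun x => x * c)) => [x y|]; ring. Qed.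

Lemma sum_Rminus F G :
  \big[Rplus/0]_(k < n) (F k - G k) =
  \big[Rplus/0]_(k < n) F k - \big[Rplus/0]_(k < n) G k.
Proof.
rewrite /Rminus big_split /=; congr (_ + _).
by apply: esym; apply: (big_endo Ropp) => [x y|]; ring.
Qed.

Lemma Rabs_sum_le F :
  Rabs (\big[Rplus/0]_(k < n) F k) <= \big[Rplus/0]_(k < n) Rabs (F k).
Proof.
apply: (big_ind2 (fun x y => Rabs x <= y)) => [|x1 x2 y1 y2 H1 H2|k _].
- by rewrite Rabs_R0; lra.
- by have := Rabs_triang x1 y1; lra.
- exact: Rle_refl.
Qed.

Lemma sum_le_const F c :
  (forall k, F k <= c) -> \big[Rplus/0]_(k < n) F k <= INR n * c.
Proof.
elim: n F => [|m IH] F HF; first by rewrite big_ord0 /= Rmult_0_l; exact: Rle_refl.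
rewrite big_ord_recr S_INR Rmult_plus_distr_r Rmult_1_l.
have /= := IH (fun k => F (widen_ord (leqnSn m) k)) (fun k => HF _).
by have := HF ord_max; lra.
Qed.

Lemma Rabs_sum_bound F c :
  (forall k, Rabs (F k) <= c) -> Rabs (\big[Rplus/0]_(k < n) F k) <= INR n * c.
Proof. by move=> HF; apply: Rle_trans (Rabs_sum_le F) (sum_le_const HF). Qed.

Lemma Rabs_le_sum_abs F k : Rabs (F k) <= \big[Rplus/0]_(m < n) Rabs (F m).
Proof.
rewrite (bigD1 k) //= -{1}(Rplus_0_r (Rabs (F k))); apply: Rplus_le_compat_l.
apply: (big_ind (fun x => 0 <= x)) => [|x y|m _]; [lra | lra | exact: Rabs_pos].
Qed.

End RealSums.

Definition basisv n (i : 'I_n) : vec n := fun k => if k == i then 1 else 0.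

Section AffineAlgebra.
Variable n : nat.
Implicit Types (A B : mat n) (x y : vec n) (g h : aff n).

Lemma mulmvA A B x : mulmv (mulmm A B) x = mulmv A (mulmv B x).
Proof.
apply: functional_extensionality => i; rewrite /mulmv /mulmm.
under eq_bigr => k _ do rewrite Rmult_suml.
rewrite exchange_big /=; apply: eq_bigr => m _; rewrite Rmult_sumr.
by apply: eq_bigr => k _; ring.
Qed.

Lemma mulmv_addv A x y : mulmv A (addv x y) = addv (mulmv A x) (mulmv A y).
Proof.
apply: functional_extensionality => i; rewrite /mulmv /addv -big_split /=.
by apply: eq_bigr => k _; ring.
Qed.

Lemma mulmv_idm x : mulmv (@idm n) x = x.
Proof.
apply: functional_extensionality => i; rewrite /mulmv /idm (bigD1 i) //= eqxx.
rewrite big1 => [|k Hk]; first ring.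
by rewrite eq_sym (negbTE Hk); ring.
Qed.

Lemma mulmv_basisv A i j : mulmv A (basisv i) j = A j i.
Proof.
rewrite /mulmv /basisv (bigD1 i) //= eqxx big1 => [|k Hk]; first ring.
by rewrite (negbTE Hk); ring.
Qed.

Lemma mulmv_sub A x y j :
  mulmv A (fun k => x k - y k) j = mulmv A x j - mulmv A y j.
Proof.
rewrite /mulmv -sum_Rminus; apply: eq_bigr => k _; ring.
Qed.

Lemma act_comp g h x : act (comp g h) x = act g (act h x).
Proof.
rewrite /act /comp /= mulmvA mulmv_addv.
by apply: functional_extensionality => i; rewrite /addv; ring.
Qed.

Lemma act_aff_id x : act (@aff_id n) x = x.
Proof.
rewrite /act /= mulmv_idm.
by apply: functional_extensionality => i; rewrite /addv; ring.
Qed.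

Lemma act_zero g : act g (fun _ => 0) = g.2.
Proof.
apply: functional_extensionality => j; rewrite /act /addv /mulmv big1 => [|k _]; ring.
Qed.

Lemma act_basisv g i j : act g (basisv i) j = g.1 j i + g.2 j.
Proof. by rewrite /act /addv mulmv_basisv. Qed.

Lemma Rabs_mulmv_le A x a c j :
  (forall j k, Rabs (A j k) <= a) -> (forall k, Rabs (x k) <= c) ->
  Rabs (mulmv A x j) <= INR n * (a * c).
Proof.
move=> HA Hx; apply: Rabs_sum_bound => k; rewrite Rabs_mult.
by apply: Rmult_le_compat; [exact: Rabs_pos | exact: Rabs_pos | exact: HA | exact: Hx].
Qed.

End AffineAlgebra.

Lemma list_pos_lower_bound (A : Type) (f : A -> R) (l : list A) :
  exists m, 0 < m /\ forall a, In a l -> 0 < f a -> m <= f a.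
Proof.
elim: l => [|a l [m [Hm H]]]; first by exists 1; split => //; lra.
case: (Rlt_le_dec 0 (f a)) => Ha.
- exists (Rmin m (f a)); split; first exact: Rmin_pos.
  move=> b [<-|Hb] Hfb; first exact: Rmin_r.
  exact: Rle_trans (Rmin_l _ _) (H _ Hb Hfb).
- exists m; split => // b [<-|Hb] Hfb; [lra | exact: H].
Qed.

Lemma list_upper_bound (A : Type) (f : A -> R) (l : list A) :
  exists M, 0 <= M /\ forall a, In a l -> f a <= M.
Proof.
elim: l => [|a l [M [HM H]]]; first by exists 0; split => //; lra.
exists (Rmax M (f a)); split; first exact: Rle_trans HM (Rmax_l _ _).
move=> b [<-|Hb]; first exact: Rmax_r.
exact: Rle_trans (H _ Hb) (Rmax_l _ _).
Qed.

Lemma In_enum (T : finType) (t : T) : In t (enum T).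
Proof.
have : t \in enum T by rewrite mem_enum.
elim: (enum T) => [|y s IH] //=; rewrite seq.in_cons => /orP [/eqP ->|H].
- by left.
- by right; apply: IH.
Qed.

Lemma finite_upper_bound (T : finType) (F : T -> R) :
  exists M, 0 <= M /\ forall t, F t <= M.
Proof.
have [M [HM H]] := list_upper_bound F (enum T).
by exists M; split => // t; apply: H; apply: In_enum.
Qed.

Record ball_space {X : Type} (ball : X -> R -> X -> Prop) : Prop := {
  ball_center : forall x e, 0 < e -> ball x e x;
  ball_sym : forall x y e, ball x e y -> ball y e x;
  ball_triangle : forall x y z e1 e2, ball x e1 y -> ball y e2 z -> ball x (e1 + e2) z;
  ball_le : forall x y e1 e2, e1 <= e2 -> ball x e1 y -> ball x e2 y;
  ball_separated : forall x y, x <> y -> exists e, 0 < e /\ ~ ball x e y;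
  ball_finite : forall x y, exists e, ball x e y }.

Section BallSpaces.
Variables (X : Type) (ball : X -> R -> X -> Prop).
Hypothesis Hb : ball_space ball.

(* Unlike [ball p r], which need not be open for an abstract ball relation,
   this set is open. *)
Definition inner_ball p r y := exists e, 0 < e /\ forall z, ball y e z -> ball p r z.

Lemma open_inner_ball p r : is_open ball (inner_ball p r).
Proof.
move=> y [e [He Hy]]; exists (e / 2); split; first lra.
move=> y' Hy'; exists (e / 2); split; first lra.
move=> z Hz; apply: Hy; apply: (ball_le Hb (e1 := e / 2 + e / 2)); first lra.
exact (ball_triangle Hb Hy' Hz).
Qed.

Lemma inner_ball_center p r : 0 < r -> inner_ball p r p.
Proof. by move=> Hr; exists r. Qed.

Lemma inner_ball_sub p r y : inner_ball p r y -> ball p r y.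
Proof. by move=> [e [He H]]; apply: H; exact (ball_center Hb _ He). Qed.

Lemma compact_closed K p :
  compact ball K -> (forall e, 0 < e -> exists x, K x /\ ball p e x) -> K p.
Proof.
move=> HK Hp; apply: NNPP => HKp.
pose U (e : R) x := 0 < e /\ exists e', e < e' /\ ~ ball p e' x.
have HU : forall e, is_open ball (U e).
  move=> e x [He [e' [He' Hn]]]; exists ((e' - e) / 2); split; first lra.
  move=> y Hy; split => //; exists (e + (e' - e) / 2); split; first lra.
  move=> Hpy; apply: Hn; apply: (ball_le Hb (e1 := e + (e' - e) / 2 + (e' - e) / 2)).
    lra.
  exact (ball_triangle Hb Hpy (ball_sym Hb Hy)).
have Hc : forall x, K x -> exists e, U e x.
  move=> x Kx; have Hne : p <> x by move=> E; apply: HKp; rewrite E.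
  have [e0 [He0 Hn]] := ball_separated Hb Hne.
  by exists (e0 / 2); split; [lra | exists e0; split => //; lra].
have [l Hl] := HK R U HU Hc.
have [m [Hm0 Hml]] := list_pos_lower_bound id l.
have [x [Kx Hx]] := Hp m Hm0.
have [e [Hel [He [e' [He' Hn]]]]] := Hl x Kx.
by apply: Hn; apply: (ball_le Hb (e1 := m)) => //; have := Hml e Hel He; rewrite /=; lra.
Qed.

Lemma compact_bounded K p : compact ball K -> exists r, forall x, K x -> ball p r x.
Proof.
move=> HK.
have Hc : forall x, K x -> exists r, inner_ball p r x.
  move=> x _; have [e0 He0] := ball_finite Hb p x.
  exists (e0 + 1), 1; split; first lra.
  by move=> z Hz; exact (ball_triangle Hb He0 Hz).
have [l Hl] := HK R (inner_ball p) (@open_inner_ball p) Hc.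
have [M [_ HM]] := list_upper_bound id l.
exists M => x Kx; have [r [Hrl Hx]] := Hl x Kx.
exact (ball_le Hb (HM _ Hrl) (inner_ball_sub Hx)).
Qed.

Lemma compact_cluster K (Q : R -> X -> Prop) :
  compact ball K ->
  (forall e, 0 < e -> exists x, Q e x) -> (forall e x, Q e x -> K x) ->
  (forall e1 e2 x, e1 <= e2 -> Q e1 x -> Q e2 x) ->
  exists p, forall e d, 0 < e -> 0 < d -> exists x, Q e x /\ ball p d x.
Proof.
move=> HK Hne HQK HQm; apply: NNPP => Hn.
pose U (t : X * R * R) z :=
  (0 < t.1.2 /\ ~ (exists x, Q t.1.2 x /\ ball t.1.1 t.2 x)) /\ inner_ball t.1.1 t.2 z.
have HU : forall t, is_open ball (U t).
  move=> t z [Ht0 Hz]; have [e [He H]] := open_inner_ball Hz.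
  by exists e; split => // y Hy; split => //; exact: H.
have Hc : forall x, K x -> exists t, U t x.
  move=> x _.
  have [e [d [He [Hd H]]]] :
      exists e d, 0 < e /\ 0 < d /\ ~ (exists y, Q e y /\ ball x d y).
    apply: NNPP => H; apply: Hn; exists x => e d He Hd.
    by apply: NNPP => H'; apply: H; exists e, d.
  by exists (x, e, d); split; [split | exact: inner_ball_center].
have [l Hl] := HK _ U HU Hc.
have [m [Hm0 Hml]] := list_pos_lower_bound (fun t : X * R * R => t.1.2) l.
have [x Hx] := Hne m Hm0.
have [t [Htl [[He Hno] Hint]]] := Hl x (HQK _ _ Hx).
apply: Hno; exists x; split; last exact: inner_ball_sub Hint.
by apply: HQm Hx; exact: Hml.
Qed.

Lemma compact_closed_subset K S :
  compact ball K -> (forall x, S x -> K x) ->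
  (forall p, (forall e, 0 < e -> exists x, S x /\ ball p e x) -> S p) ->
  compact ball S.
Proof.
move=> HK HSK HScl I U HU Hc.
pose U' (o : option I) x := if o is Some i then U i x else ~ S x.
have HU' : forall o, is_open ball (U' o).
  case=> [i|]; first exact: HU.
  move=> x Hx /=; apply: NNPP => H; apply: Hx; apply: HScl => e He.
  apply: NNPP => H'; apply: H; exists e; split => // y Hy Sy; apply: H'.
  by exists y.
have Hc' : forall x, K x -> exists o, U' o x.
  move=> x Kx; case: (classic (S x)) => Sx; last by exists None.
  by have [i Hi] := Hc x Sx; exists (Some i).
have [l Hl] := HK _ U' HU' Hc'.
exists (flat_map (fun o => if o is Some i then i :: nil else nil) l) => x Sx.
have [[i|] [Hin Hx]] := Hl x (HSK _ Sx) => //.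
by exists i; split => //; apply/in_flat_map; exists (Some i); split => //; left.
Qed.

Lemma ball_eq g h c : 0 <= c -> (forall d, 0 < d -> ball g (c * d + d) h) -> g = h.
Proof.
move=> Hc H; apply: NNPP => Hne.
have [e [He Hn]] := ball_separated Hb Hne; apply: Hn.
have Hd : 0 < e / (c + 1) by apply: Rdiv_lt_0_compat; lra.
by apply: (ball_le Hb _ (H _ Hd)); right; field; lra.
Qed.

End BallSpaces.

Lemma compact_ext {X : Type} (ball : X -> R -> X -> Prop) (K K' : X -> Prop) :
  (forall x, K x <-> K' x) -> compact ball K -> compact ball K'.
Proof.
move=> H HK I U HU Hc.
have [l Hl] := HK I U HU (fun x Kx => Hc x (proj1 (H x) Kx)).
by exists l => x Kx; exact: Hl x (proj2 (H x) Kx).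
Qed.

Section Transport.
Variables (X Y : Type) (f : X -> Y) (bX : X -> R -> X -> Prop) (bY : Y -> R -> Y -> Prop).
Hypothesis f_ball : forall x e y, bX x e y <-> bY (f x) e (f y).
Hypothesis f_inj : forall x y, f x = f y -> x = y.

Lemma ball_space_transport : ball_space bY -> ball_space bX.
Proof.
move=> HbY; split.
- by move=> x e He; apply/f_ball; exact (ball_center HbY _ He).
- by move=> x y e H; apply/f_ball; exact (ball_sym HbY (proj1 (f_ball _ _ _) H)).
- move=> x y z e1 e2 H1 H2; apply/f_ball.
  exact (ball_triangle HbY (proj1 (f_ball _ _ _) H1) (proj1 (f_ball _ _ _) H2)).
- move=> x y e1 e2 He H; apply/f_ball.
  exact (ball_le HbY He (proj1 (f_ball _ _ _) H)).
- move=> x y Hxy; have Hne : f x <> f y by move=> E; apply: Hxy; exact: f_inj.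
  have [e [He Hn]] := ball_separated HbY Hne.
  by exists e; split => // H; apply: Hn; apply/f_ball.
- by move=> x y; have [e He] := ball_finite HbY (f x) (f y); exists e; apply/f_ball.
Qed.

Lemma compact_transport KX KY :
  (forall y, exists x, f x = y) -> (forall x, KX x <-> KY (f x)) ->
  compact bY KY -> compact bX KX.
Proof.
move=> f_surj HK HcY I U HU Hc.
pose V i y := exists x, f x = y /\ U i x.
have HV : forall i, is_open bY (V i).
  move=> i y [x [<- Hx]]; have [e [He H]] := HU i x Hx.
  exists e; split => // y' Hy'; have [x' Ex'] := f_surj y'.
  by exists x'; split => //; apply: H; apply/f_ball; rewrite Ex'.
have HcV : forall y, KY y -> exists i, V i y.
  move=> y Ky; have [x Ex] := f_surj y; rewrite -Ex in Ky.
  by have [i Hi] := Hc x (proj2 (HK x) Ky); exists i, x.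
have [l Hl] := HcY I V HV HcV.
exists l => x Kx; have [i [Hil [x' [E Hx']]]] := Hl (f x) (proj1 (HK x) Kx).
by exists i; split => //; rewrite -(f_inj E).
Qed.

End Transport.

Section FiniteSupNorm.
Variable T : finType.

Definition ballf (u : T -> R) e (v : T -> R) := forall t, Rabs (u t - v t) < e.

Lemma ballf_space : ball_space ballf.
Proof.
split.
- by move=> x e He t; rewrite Rminus_diag Rabs_R0.
- by move=> x y e H t; rewrite Rabs_minus_sym; exact: H.
- move=> x y z e1 e2 H1 H2 t.
  have := Rabs_triang (x t - y t) (y t - z t); have := H1 t; have := H2 t.
  have -> : x t - y t + (y t - z t) = x t - z t by ring.
  lra.
- by move=> x y e1 e2 He H t; have := H t; lra.
- move=> x y Hxy.
  have [t Ht] : exists t, x t <> y t.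
    apply: NNPP => H; apply: Hxy; apply: functional_extensionality => t.
    by apply: NNPP => H'; apply: H; exists t.
  exists (Rabs (x t - y t)); split; first by apply: Rabs_pos_lt; lra.
  by move=> H; have := H t; lra.
- move=> x y; have [M [_ HM]] := finite_upper_bound (fun t => Rabs (x t - y t)).
  by exists (M + 1) => t; have := HM t; lra.
Qed.

Definition cube (a : T -> R) w (u : T -> R) := forall t, a t <= u t <= a t + w.

Lemma nested_cubes_point (a : nat -> T -> R) (w : nat -> R) :
  (forall k, 0 <= w k) ->
  (forall k t, a k t <= a k.+1 t /\ a k.+1 t + w k.+1 <= a k t + w k) ->
  exists p, forall k, cube (a k) (w k) p.
Proof.
move=> Hw Hnest.
have Hmono : forall k m t, (k <= m)%N -> a k t <= a m t /\ a m t + w m <= a k t + w k.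
  move=> k m t; elim: m => [|m IH]; first by rewrite leqn0 => /eqP ->; lra.
  rewrite leq_eqVlt => /orP [/eqP ->|Hkm]; first lra.
  by have := IH Hkm; have := Hnest m t; lra.
have Hbound : forall m k t, a m t <= a k t + w k.
  move=> m k t; case: (leqP m k) => H.
  - by have := Hmono m k t H; have := Hw k; lra.
  - by have := Hmono k m t (ltnW H); have := Hw m; lra.
pose E t x := exists m, x = a m t.
have HE : forall t, bound (E t) by move=> t; exists (a O t + w O) => x [m ->].
have HE0 : forall t, exists x, E t x by move=> t; exists (a O t), O.
exists (fun t => proj1_sig (completeness (E t) (HE t) (HE0 t))) => k t.
case: (completeness (E t) (HE t) (HE0 t)) => /= p [Hub Hlub]; split.
- by apply: Hub; exists k.
- by apply: Hlub => x [m ->].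
Qed.

Lemma pow2_inv_small w0 e : 0 < e -> exists k, w0 / 2 ^ k < e.
Proof.
move=> He; have [k Hk] := INR_archimed e w0 He.
have Hpow : INR k <= 2 ^ k.
  elim: (k) => [|m IH]; first by rewrite /=; lra.
  rewrite S_INR /=; have : 1 <= 2 ^ m by apply: pow_R1_Rle; lra.
  lra.
have HP : 0 < 2 ^ k by apply: pow_lt; lra.
exists k; rewrite /Rdiv; apply: (Rmult_lt_reg_r (2 ^ k)) => //.
by rewrite Rmult_assoc Rinv_l; [nra | lra].
Qed.

End FiniteSupNorm.

Section Bisection.
Variables (T : finType) (I : Type) (U : I -> (T -> R) -> Prop).

Definition finitely_covered a w :=
  exists l : list I, forall u, cube a w u -> exists i, In i l /\ U i u.

Definition subcube (a : T -> R) w (s : {ffun T -> bool}) : T -> R :=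
  fun t => a t + (if s t then w / 2 else 0).

Lemma finitely_covered_subcubes a w :
  (forall s, finitely_covered (subcube a w s) (w / 2)) -> finitely_covered a w.
Proof.
move=> /ClassicalEpsilon.choice [cover Hcover].
exists (concat (map cover (enum {ffun T -> bool}))) => u Hu.
pose s := [ffun t => if Rlt_dec (a t + w / 2) (u t) then true else false].
have Hs : cube (subcube a w s) (w / 2) u.
  move=> t; rewrite /subcube /s ffunE; have := Hu t.
  by case: (Rlt_dec (a t + w / 2) (u t)) => H1 H2 /=; split; lra.
have [i [Hi HU]] := Hcover s u Hs.
exists i; split => //; apply/in_concat; exists (cover s); split => //.
exact/in_map/In_enum.
Qed.

(* Stated as an implication so that a refinement exists for every cube, which
   lets [epsilon] pick one without knowing whether [a] is covered. *)
Definition refines a w a' :=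
  (~ finitely_covered a w -> ~ finitely_covered a' (w / 2)) /\
  forall t, a t <= a' t /\ a' t + w / 2 <= a t + w.

Lemma refines_exists a w : 0 <= w -> exists a', refines a w a'.
Proof.
move=> Hw; case: (classic (finitely_covered a w)) => H.
  by exists a; split => // t; lra.
have [s Hs] : exists s, ~ finitely_covered (subcube a w s) (w / 2).
  apply: NNPP => H'; apply: H; apply: finitely_covered_subcubes => s.
  by apply: NNPP => H''; apply: H'; exists s.
by exists (subcube a w s); split => // t; rewrite /subcube; case: (s t); lra.
Qed.

End Bisection.

Theorem compact_cube (T : finType) a0 w0 : 0 <= w0 -> compact (@ballf T) (cube a0 w0).
Proof.
move=> Hw0 I U HU Hc; apply: NNPP => Hn.
pose w k := w0 / 2 ^ k.
have Hw : forall k, 0 <= w k.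
  move=> k; apply: Rmult_le_pos => //.
  by apply/Rlt_le/Rinv_0_lt_compat/pow_lt; lra.
have HwS : forall k, w k / 2 = w k.+1.
  by move=> k; rewrite /w /=; field; apply: pow_nonzero; lra.
pose next a k := epsilon (inhabits a) (refines U a (w k)).
have Hnext : forall a k, refines U a (w k) (next a k).
  by move=> a k; apply: epsilon_spec; apply: refines_exists.
pose fix a k := if k is k'.+1 then next (a k') k' else a0.
have Hbad : forall k, ~ finitely_covered U (a k) (w k).
  elim=> [|k IH]; first by rewrite /w /= Rdiv_1_r.
  by rewrite -HwS; exact: (proj1 (Hnext (a k) k)).
have Hnest : forall k t, a k t <= a k.+1 t /\ a k.+1 t + w k.+1 <= a k t + w k.
  by move=> k t; rewrite -HwS; exact: (proj2 (Hnext (a k) k)).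
have [p Hp] := nested_cubes_point Hw Hnest.
have [i Hi] : exists i, U i p by apply: Hc; have := Hp O; rewrite /w /= Rdiv_1_r.
have [e [He HUi]] := HU i p Hi.
have [k Hk] := pow2_inv_small w0 He.
apply: (Hbad k); exists (i :: nil) => u Hu; exists i; split; first by left.
apply: HUi => t; have := Hp k t; have := Hu t => H1 H2.
by apply: Rle_lt_trans Hk; apply: Rabs_le; rewrite -/(w k); lra.
Qed.

Definition boxf (T : finType) B (u : T -> R) := forall t, Rabs (u t) <= B.

Lemma compact_boxf (T : finType) B : 0 <= B -> compact (@ballf T) (boxf B).
Proof.
move=> HB; apply: (compact_ext (K := cube (fun _ => - B) (2 * B))).
- move=> u; split => H t; have Ht := H t.
  + by apply: Rabs_le; lra.
  + have := Rle_abs (u t); have := Rle_abs (- u t); rewrite Rabs_Ropp.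
    by split; lra.
- by apply: compact_cube; lra.
Qed.

Section AffineTopology.
Variable n : nat.

(* Viewing an affine map as the real function of its [n * n + n] entries
   transports compactness of sup-norm boxes to [balla]. *)
Definition aff_index := ('I_n * 'I_n + 'I_n)%type.

Definition aff_coords (g : aff n) : aff_index -> R :=
  fun t => match t with inl (i, j) => g.1 i j | inr i => g.2 i end.

Lemma balla_coords g e h : balla g e h <-> ballf (aff_coords g) e (aff_coords h).
Proof.
split; first by move=> [H1 H2] [[i j]|i] /=; [exact: H1 | exact: H2].
by move=> H; split => [i j|i]; [exact: (H (inl (i, j))) | exact: (H (inr i))].
Qed.

Lemma aff_coords_inj g h : aff_coords g = aff_coords h -> g = h.
Proof.
case: g h => [A b] [A' b'] E.
have -> : A = A'.
  do 2 apply: functional_extensionality => ?; exact: (f_equal (fun F => F (inl (_, _))) E).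
have -> // : b = b'.
by apply: functional_extensionality => i; exact: (f_equal (fun F => F (inr i)) E).
Qed.

Lemma aff_coords_surj (u : aff_index -> R) : exists g, aff_coords g = u.
Proof.
exists (fun i j => u (inl (i, j)), fun i => u (inr i)).
by apply: functional_extensionality => [[[i j]|i]].
Qed.

Lemma balla_space : ball_space (@balla n).
Proof.
exact: (ball_space_transport balla_coords aff_coords_inj (@ballf_space _)).
Qed.

Lemma ballv_space : ball_space (@ballv n).
Proof. exact: ballf_space. Qed.

Lemma compact_ballv_bounded K :
  compact (@ballv n) K -> exists B, 0 <= B /\ forall x, K x -> forall i, Rabs (x i) <= B.
Proof.
move=> HK; have [B HB] := compact_bounded ballv_space (fun _ => 0) HK.
exists (Rmax 0 B); split => [|x Kx i]; first exact: Rmax_l.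
have := HB x Kx i; rewrite Rminus_0_l Rabs_Ropp; have := Rmax_r 0 B; lra.
Qed.

Definition boxA B (g : aff n) :=
  (forall i j, Rabs (g.1 i j) <= B) /\ (forall i, Rabs (g.2 i) <= B).

Lemma compact_boxA B : 0 <= B -> compact (@balla n) (boxA B).
Proof.
move=> HB; apply: (compact_transport balla_coords aff_coords_inj aff_coords_surj _
  (compact_boxf (T := aff_index) HB)).
move=> g; split; first by move=> [H1 H2] [[i j]|i] /=; [exact: H1 | exact: H2].
by move=> H; split => [i j|i]; [exact: (H (inl (i, j))) | exact: (H (inr i))].
Qed.

Lemma boxA_closed B p :
  0 <= B -> (forall e, 0 < e -> exists g, boxA B g /\ balla p e g) -> boxA B p.
Proof. by move=> HB; apply: (compact_closed balla_space (compact_boxA HB)). Qed.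

Lemma Rabs_sum_mul_sub_le (u v u' v' : 'I_n -> R) M d :
  (forall k, Rabs (v k) <= M) -> (forall k, Rabs (u' k) <= M) ->
  (forall k, Rabs (u k - u' k) < d) -> (forall k, Rabs (v k - v' k) < d) ->
  Rabs (\big[Rplus/0]_(k < n) (u k * v k) - \big[Rplus/0]_(k < n) (u' k * v' k))
    <= INR n * (2 * M * d).
Proof.
move=> Hv Hu' Hu Hvv; rewrite -sum_Rminus; apply: Rabs_sum_bound => k.
have -> : u k * v k - u' k * v' k = (u k - u' k) * v k + u' k * (v k - v' k) by ring.
apply: Rle_trans (Rabs_triang _ _) _; rewrite !Rabs_mult.
have H1 : Rabs (u k - u' k) * Rabs (v k) <= d * M.
  by apply: Rmult_le_compat; [exact: Rabs_pos | exact: Rabs_pos | exact: Rlt_le | exact: Hv].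
have H2 : Rabs (u' k) * Rabs (v k - v' k) <= M * d.
  by apply: Rmult_le_compat; [exact: Rabs_pos | exact: Rabs_pos | exact: Hu' | exact: Rlt_le].
lra.
Qed.

Lemma ballv_act (a a' : aff n) x x' M d :
  (forall j k, Rabs (a'.1 j k) <= M) -> (forall k, Rabs (x k) <= M) ->
  balla a d a' -> ballv x d x' ->
  ballv (act a x) (INR n * (2 * M * d) + d) (act a' x').
Proof.
move=> Ha' Hx [H1 H2] Hxx j; rewrite /act /addv.
have -> : mulmv a.1 x j + a.2 j - (mulmv a'.1 x' j + a'.2 j) =
  (mulmv a.1 x j - mulmv a'.1 x' j) + (a.2 j - a'.2 j) by ring.
apply: Rle_lt_trans (Rabs_triang _ _) _.
have := Rabs_sum_mul_sub_le (u := a.1 j) (u' := a'.1 j) Hx (Ha' j) (H1 j) Hxx.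
by have := H2 j; rewrite /mulmv; lra.
Qed.

Lemma balla_comp (a a' b b' : aff n) M d :
  boxA M a' -> boxA M b -> balla a d a' -> balla b d b' ->
  balla (comp a b) (INR n * (2 * M * d) + d) (comp a' b').
Proof.
move=> [Ha1 Ha2] [Hb1 Hb2] [H1 H2] [H3 H4]; split.
- move=> i j; have Hd : 0 < d.
    by have := Rabs_pos (a.1 i j - a'.1 i j); have := H1 i j; lra.
  have := Rabs_sum_mul_sub_le (u := a.1 i) (v := fun k => b.1 k j) (u' := a'.1 i)
    (v' := fun k => b'.1 k j) (fun k => Hb1 k j) (Ha1 i) (H1 i) (fun k => H3 k j).
  by rewrite /comp /mulmm /=; lra.
- exact: ballv_act Ha1 Hb2 (conj H1 H2) H4.
Qed.

End AffineTopology.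

Lemma closed_of_proper n (L : aff n -> Prop) : proper_action L -> closed_in_Aff L.
Proof.
move=> Hp g Hg HnL; apply: NNPP => Hn.
have Hnear : forall e, 0 < e -> exists h, L h /\ balla g e h.
  move=> e He; apply: NNPP => H; apply: Hn; exists e; split => // h _ Hh Lh.
  by apply: H; exists h.
have [M [HM0 HM]] := finite_upper_bound (fun i : 'I_n => Rabs (g.2 i)).
pose K (x : vec n) := forall i, Rabs (x i) <= M + 1.
have HK : compact (@ballv n) K by apply: compact_boxf; lra.
apply: HnL; suff : L g /\ exists x, K x /\ K (act g x) by case.
apply: (compact_closed (balla_space n) (Hp K HK)) => e He.
have [h [Lh [Hh1 Hh2]]] := Hnear (Rmin e 1) (Rmin_pos _ _ He Rlt_0_1).
exists h; split; last by split => [i j|i]; apply: Rlt_le_trans (Rmin_l e 1).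
split => //; exists (fun _ => 0); split => i; first by rewrite Rabs_R0; lra.
rewrite act_zero; have := Hh2 i; have := HM i; have := Rmin_r e 1.
by have := Rabs_triang_inv (h.2 i) (g.2 i); rewrite Rabs_minus_sym /=; lra.
Qed.

Lemma Rabs_add_sub_le a b c : Rabs (a + b - c) <= Rabs a + Rabs b + Rabs c.
Proof.
have := Rabs_triang (a + b) (- c); have := Rabs_triang a b.
by rewrite Rabs_Ropp /Rminus; lra.
Qed.

Section ReturnSetBound.
Variables (n : nat) (L : aff n -> Prop).

Lemma centralizer_act_comm h l x :
  centralizer L h -> L l -> act l (act h x) = act h (act l x).
Proof. by move=> [_ Hc] Ll; rewrite -!act_comp Hc. Qed.

Lemma linear_part_centralizer h l i j :
  centralizer L h -> L l -> act h (fun _ => 0) = basisv i ->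
  l.1 j i = act h l.2 j - l.2 j.
Proof.
move=> Hh Ll Hi.
by have := act_basisv l i j; rewrite -Hi centralizer_act_comm // act_zero => ->; ring.
Qed.

Hypothesis HC : transitive_on_Rn (centralizer L).

Lemma linear_part_bound : exists a b, 0 <= a /\ 0 <= b /\
  forall l Y, L l -> (forall k, Rabs (l.2 k) <= Y) -> forall j i, Rabs (l.1 j i) <= a + b * Y.
Proof.
have /ClassicalEpsilon.choice [h Hh] :
    forall i : 'I_n, exists h, centralizer L h /\ act h (fun _ => 0) = basisv i.
  by move=> i; apply: HC.
have [a [Ha HA]] :=
  finite_upper_bound (fun t : 'I_n * 'I_n * 'I_n => Rabs ((h t.1.1).1 t.1.2 t.2)).
have [a' [Ha' Hb]] := finite_upper_bound (fun t : 'I_n * 'I_n => Rabs ((h t.1).2 t.2)).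
exists (a + a'), (INR n * a + 1); split; first lra.
split; first by have := pos_INR n; nra.
move=> l Y Ll HY j i.
rewrite (linear_part_centralizer j (proj1 (Hh i)) Ll (proj2 (Hh i))) /act /addv.
apply: Rle_trans (Rabs_add_sub_le _ _ _) _.
have := Rabs_mulmv_le (A := (h i).1) j (fun j k => HA (i, j, k)) HY.
by have := Hb (i, j); have := HY j; have := Rabs_pos (l.2 j) => /=; nra.
Qed.

(* With [h 0 = p] for some [h] in the centralizer, [l p = h (l 0)]; so near [p]
   a bound on [l x] bounds [l 0] up to a term proportional to the size of
   [l 0] itself times the distance from [x] to [p], which is absorbed for
   [x] close enough to [p]. *)
Lemma translation_bound_near p R0 : 0 <= R0 -> exists r C, 0 < r /\
  forall l x, L l -> ballv p r x -> (forall j, Rabs (act l x j) <= R0) ->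
  forall k, Rabs (l.2 k) <= C.
Proof.
move=> HR0.
have [a [b [Ha [Hb Hlin]]]] := linear_part_bound.
have [h [Hch Hh0]] := HC (fun _ => 0) p.
have [B [_ HB]] := proj1 Hch.
have [bB [HbB0 HbB]] := finite_upper_bound (fun t : 'I_n * 'I_n => Rabs (B t.1 t.2)).
have [bh [Hbh0 Hbh]] := finite_upper_bound (fun k => Rabs (h.2 k)).
pose c := INR n * (INR n * (bB * (INR n * b))).
have Hc : 0 <= c by rewrite /c; repeat (apply: Rmult_le_pos || exact: pos_INR || done).
pose r := / (2 * c + 2).
have Hr : 0 < r by apply: Rinv_0_lt_compat; lra.
have Hcr : c * r <= 1 / 2.
  rewrite /r; apply: (Rmult_le_reg_r (2 * c + 2)); first lra.
  by rewrite Rmult_assoc Rinv_l; lra.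
pose C0 := INR n * (INR n * (bB * (R0 + INR n * (a * r) + bh))).
exists r, (2 * C0); split => // l x Ll Hpx Hlx k.
pose Y := \big[Rplus/0]_(m < n) Rabs (l.2 m).
have HY : forall m, Rabs (l.2 m) <= Y by move=> m; exact: Rabs_le_sum_abs.
have Hlp : act l p = act h l.2.
  by rewrite -Hh0 centralizer_act_comm // act_zero.
have Hlp_bound : forall j, Rabs (act l p j - h.2 j) <= R0 + INR n * ((a + b * Y) * r) + bh.
  move=> j; have -> : act l p j - h.2 j = act l x j + mulmv l.1 (fun m => p m - x m) j - h.2 j.
    by rewrite mulmv_sub /act /addv; ring.
  apply: Rle_trans (Rabs_add_sub_le _ _ _) _.
  have := Rabs_mulmv_le j (Hlin l Y Ll HY) (fun m => Rlt_le _ _ (Hpx m)).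
  by have := Hlx j; have := Hbh j; lra.
have Hl2 : l.2 = mulmv B (fun j => act l p j - h.2 j).
  have -> : (fun j => act l p j - h.2 j) = mulmv h.1 l.2.
    by apply: functional_extensionality => j; rewrite Hlp /act /addv; ring.
  by rewrite -mulmvA HB mulmv_idm.
have HYle : Y <= C0 + c * r * Y.
  have -> : C0 + c * r * Y =
      INR n * (INR n * (bB * (R0 + INR n * ((a + b * Y) * r) + bh))) by rewrite /C0 /c; ring.
  apply: sum_le_const => m; rewrite Hl2.
  exact: Rabs_mulmv_le (fun j m => HbB (j, m)) Hlp_bound.
have HY0 : 0 <= Y by have := HY k; have := Rabs_pos (l.2 k); lra.
have : c * r * Y <= 1 / 2 * Y by apply: Rmult_le_compat_r.
by have := HY k; lra.
Qed.

Lemma translation_bound K : compact (@ballv n) K -> exists C, 0 <= C /\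
  forall l x, L l -> K x -> K (act l x) -> forall k, Rabs (l.2 k) <= C.
Proof.
move=> HK; have [RK [HRK HKb]] := compact_ballv_bounded HK.
have /ClassicalEpsilon.choice [rC HrC] : forall p, exists rC : R * R, 0 < rC.1 /\
    forall l x, L l -> ballv p rC.1 x -> (forall j, Rabs (act l x j) <= RK) ->
    forall k, Rabs (l.2 k) <= rC.2.
  by move=> p; have [r [C H]] := translation_bound_near p HRK; exists (r, C).
have Hcover : forall x, K x -> exists p, inner_ball (@ballv n) p (rC p).1 x.
  by move=> x _; exists x; exact: inner_ball_center (proj1 (HrC x)).
have [lp Hlp] := HK _ _ (fun p => open_inner_ball (ballv_space n) (p := p) (r := (rC p).1)) Hcover.
have [C [HC0 HCb]] := list_upper_bound (fun p => (rC p).2) lp.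
exists C; split => // l x Ll Kx Klx k.
have [p [Hp Hx]] := Hlp x Kx.
apply: Rle_trans (HCb p Hp).
apply: (proj2 (HrC p) l x Ll (inner_ball_sub (ballv_space n) Hx)).
exact: HKb _ Klx.
Qed.

Lemma return_set_bounded K : compact (@ballv n) K -> exists M, 0 <= M /\
  forall l, L l -> (exists x, K x /\ K (act l x)) -> boxA M l.
Proof.
move=> HK; have [a [b [Ha [Hb Hlin]]]] := linear_part_bound.
have [C [HC0 HCb]] := translation_bound HK.
exists (a + b * C + C); split; first nra.
move=> l Ll [x [Kx Klx]]; have HCl := HCb l x Ll Kx Klx.
split => [j i|k]; last by have := HCl k; nra.
by have := Hlin l C Ll HCl j i; nra.
Qed.

End ReturnSetBound.

Definition return_set n (L : aff n -> Prop) (K : vec n -> Prop) (l : aff n) :=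
  L l /\ exists x, K x /\ K (act l x).

Lemma return_set_inv n (L : aff n -> Prop) K l : subgroup L -> return_set L K l ->
  exists l', return_set L K l' /\ comp l l' = @aff_id n /\ comp l' l = @aff_id n.
Proof.
move=> [_ [_ [_ HLinv]]] [Ll [x [Kx Klx]]].
have [l' [Ll' [E1 E2]]] := HLinv l Ll.
exists l'; split => //; split => //; exists (act l x); split => //.
by rewrite -act_comp E2 act_aff_id.
Qed.

Section Limits.
Variables (n : nat) (S : aff n -> Prop) (M : R) (p : aff n).
Hypotheses (HM : 0 <= M) (HSM : forall l, S l -> boxA M l).
Hypothesis Hp : forall e, 0 < e -> exists l, S l /\ balla p e l.

Lemma boxA_limit : boxA M p.
Proof.
apply: boxA_closed HM _ => e He; have [l [Sl Hl]] := Hp He.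
by exists l; split => //; exact: HSM.
Qed.

(* A cluster point [g] of the inverses of elements of [S] near [p] is an
   inverse of [p], by continuity of composition on bounded sets. *)
Lemma is_aff_limit :
  (forall l, S l -> exists l', S l' /\ comp l l' = @aff_id n /\ comp l' l = @aff_id n) ->
  is_aff p.
Proof.
move=> HSinv.
pose Q e l' := exists l, S l /\ balla p e l /\ S l' /\
  comp l l' = @aff_id n /\ comp l' l = @aff_id n.
have HQne : forall e, 0 < e -> exists l', Q e l'.
  move=> e He; have [l [Sl Hl]] := Hp He; have [l' [Sl' E]] := HSinv l Sl.
  by exists l', l.
have HQm : forall e1 e2 l', e1 <= e2 -> Q e1 l' -> Q e2 l'.
  move=> e1 e2 l' He [l [Sl [Hpl H]]]; exists l; split => //; split => //.
  exact (ball_le (balla_space n) He Hpl).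
have HQS : forall e l', Q e l' -> boxA M l' by move=> e l' [l [_ [_ [Sl' _]]]]; exact: HSM.
have [g Hg] := compact_cluster (balla_space n) (compact_boxA HM) HQne HQS HQm.
have HgB : boxA M g.
  apply: boxA_closed HM _ => e He; have [l' [Hl' Hgl']] := Hg 1 e Rlt_0_1 He.
  by exists l'; split => //; exact: HQS Hl'.
have HpB := boxA_limit.
have Hc : 0 <= INR n * (2 * M) by apply: Rmult_le_pos; [exact: pos_INR | lra].
have Hpg : comp p g = @aff_id n.
  apply: (ball_eq (balla_space n) Hc) => d Hd.
  have [l' [[l [Sl [Hpl [Sl' [E _]]]]] Hgl']] := Hg d d Hd Hd.
  rewrite -E; have -> : INR n * (2 * M) * d + d = INR n * (2 * M * d) + d by ring.
  exact: balla_comp (HSM Sl) HgB Hpl Hgl'.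
have Hgp : comp g p = @aff_id n.
  apply: (ball_eq (balla_space n) Hc) => d Hd.
  have [l' [[l [Sl [Hpl [Sl' [_ E]]]]] Hgl']] := Hg d d Hd Hd.
  rewrite -E; have -> : INR n * (2 * M) * d + d = INR n * (2 * M * d) + d by ring.
  exact: balla_comp (HSM Sl') HpB Hgl' Hpl.
by exists g.1; split; [exact: (f_equal fst Hpg) | exact: (f_equal fst Hgp)].
Qed.

Lemma limit_meets (K : vec n -> Prop) :
  compact (@ballv n) K -> (forall l, S l -> exists x, K x /\ K (act l x)) ->
  exists x, K x /\ K (act p x).
Proof.
move=> HK HSK.
pose Q e x := exists l, S l /\ balla p e l /\ K x /\ K (act l x).
have HQne : forall e, 0 < e -> exists x, Q e x.
  move=> e He; have [l [Sl Hl]] := Hp He; have [x Hx] := HSK l Sl.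
  by exists x, l.
have HQm : forall e1 e2 x, e1 <= e2 -> Q e1 x -> Q e2 x.
  move=> e1 e2 x He [l [Sl [Hpl H]]]; exists l; split => //; split => //.
  exact (ball_le (balla_space n) He Hpl).
have HQK : forall e x, Q e x -> K x by move=> e x [l [_ [_ [Kx _]]]].
have [xs Hxs] := compact_cluster (ballv_space n) HK HQne HQK HQm.
have Kxs : K xs.
  apply: (compact_closed (ballv_space n) HK) => e He.
  have [x [Hx Hxsx]] := Hxs 1 e Rlt_0_1 He.
  by exists x; split => //; exact: HQK Hx.
exists xs; split => //.
have [RK [HRK HKb]] := compact_ballv_bounded HK.
pose c := INR n * (2 * (M + RK)).
have Hc : 0 <= c by apply: Rmult_le_pos; [exact: pos_INR | lra].
apply: (compact_closed (ballv_space n) HK) => e He.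
have Hd : 0 < e / (c + 1) by apply: Rdiv_lt_0_compat; lra.
have [x [[l [Sl [Hpl [Kx Klx]]]] Hxsx]] := Hxs _ _ Hd Hd.
exists (act l x); split => //.
have Hl1 : forall j k, Rabs (l.1 j k) <= M + RK.
  by move=> j k; have := proj1 (HSM Sl) j k; lra.
have Hxs1 : forall k, Rabs (xs k) <= M + RK by move=> k; have := HKb _ Kxs k; lra.
apply: (ball_le (ballv_space n) _ (ballv_act Hl1 Hxs1 Hpl Hxsx)); right.
have -> : INR n * (2 * (M + RK) * (e / (c + 1))) = c * (e / (c + 1)) by rewrite /c; ring.
by field; lra.
Qed.

End Limits.

Lemma proper_of_closed n (L : aff n -> Prop) :
  subgroup L -> transitive_on_Rn (centralizer L) -> closed_in_Aff L -> proper_action L.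
Proof.
move=> HL HC Hcl K HK.
have [M [HM HMbox]] := return_set_bounded HC HK.
apply: (compact_closed_subset (compact_boxA HM)).
  by move=> l [Ll Hl]; exact: HMbox.
move=> p Hp; have HSM : forall l, return_set L K l -> boxA M l.
  by move=> l [Ll Hl]; exact: HMbox.
have Hpaff : is_aff p.
  by apply: (is_aff_limit HM HSM Hp) => l; exact: return_set_inv.
have Lp : L p.
  apply: NNPP => HnL; have [e [He Hno]] := Hcl p Hpaff HnL.
  have [l [[Ll _] Hl]] := Hp e He.
  exact: Hno l (proj1 HL l Ll) Hl Ll.
by split => //; apply: (limit_meets HM HSM Hp HK) => l [].
Qed.

Theorem proposition7p2 (n : nat) (L : aff n -> Prop) :
  subgroup L ->
  transitive_on_Rn (centralizer L) ->
  (proper_action L <-> closed_in_Aff L).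
Proof.
move=> HL HC; split; [exact: closed_of_proper | exact: proper_of_closed].
Qed.
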